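(* Let $1\le m<n$, let $\mathbf{b}\in\{0,1\}^{n-m}$ with $\mathbf{b}\neq\mathbf{0}_{n-m}$, let $y\in\mathbb{Q}[t]$, and let $c,c'$ be elements of multi-degree $\mathbf{W}\in\mathbb{N}^m$ of $\mathcal{L}^{\mathbb{Q}}_{T^m}(\mathbb{Q}[t];\mathbb{Q})$. If $c\sim c'$ in $\mathrm{Tot}(\mathcal{L}^{\mathbb{Q}}_{T^m}(\mathbb{Q}[t];\mathbb{Q}))$, then \[c_{(-,\mathbf{0}_{n-m})}\otimes y_{(\mathbf{0}_m,\mathbf{b})}\sim c'_{(-,\mathbf{0}_{n-m})}\otimes y_{(\mathbf{0}_m,\mathbf{b})}\] in multi-degree $(\mathbf{W},\mathbf{1}_{n-m})$ of $\mathrm{Tot}(\mathcal{L}^{\mathbb{Q}}_{T^n}(\mathbb{Q}[t];\mathbb{Q}))$.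
   Context: The $n$-chain complex $\mathcal{L}^{\mathbb{Q}}_{T^n}(\mathbb{Q}[t];\mathbb{Q})$: in multi-degree $\mathbf{V}\in\mathbb{N}^n$, elements are sums of multi-matrices of size $(v_1+1)\times\cdots\times(v_n+1)$ with entries in $\mathbb{Q}[t]$ at coordinates $\mathbf{v}\ne\mathbf{0}_n$ ($\mathbf{0}\le\mathbf{v}\le\mathbf{V}$) and in $\mathbb{Q}$ at $\mathbf{0}_n$ (tensors over $\mathbb{Q}$; $\mathbb{Q}$ a $\mathbb{Q}[t]$-module via $t\mapsto0$). In direction $i$ the slices are indexed by $j\in\{0,\dots,v_i\}$; $d_{i,j}$ ($j<v_i$) multiplies slices $j$ and $j+1$ entrywise and $d_{i,v_i}$ multiplies slice $v_i$ into slice $0$; $\mathrm{d}_i=\sum_j(-1)^jd_{i,j}$, and the total differential is $\mathrm{d}=\sum_i(-1)^{v_1+\cdots+v_{i-1}}\mathrm{d}_i$. $\sim$ means differing by a boundary in the total complex. For a multi-matrix $c$ in multi-degree $\mathbf{W}$ with entries $c_{\mathbf{a}}$, $c_{(-,\mathbf{0})}\otimes y_{(\mathbf{0},\mathbf{b})}$ is the multi-matrix in multi-degree $(\mathbf{W},\mathbf{1}_{n-m})$ with $c_{\mathbf{a}}$ at $(\mathbf{a},\mathbf{0}_{n-m})$, $y$ at $(\mathbf{0}_m,\mathbf{b})$, $1$ elsewhere, extended linearly to sums. *)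

From HB Require Import structures.
From mathcomp Require Import all_boot all_order all_algebra.
From mathcomp Require Import finmap.
From mathcomp.multinomials Require Import monalg.
Set Implicit Arguments. Unset Strict Implicit. Unset Printing Implicit Defensive.
Import GRing.Theory.
Local Open Scope ring_scope.

(* Positions in a multi-matrix: v = (v_1,...,v_n) encoded as a seq nat of size n. *)
Definition pos := seq nat.

(* The degree-V group of the
   complex, (tensor_{0<v<=V} Q[t]) (x) Q, is identified with the sub-space of
   polynomials in the variables t_v with v <= V, v <> 0 (the Q factor at the
   position 0 contributes only scalars). A multi-matrix with entries p_v
   (v<>0) and q at 0 corresponds to q * prod_v p_v(t_v). *)
Definition LQ := {malg rat[{cmonom pos}]}.

Definition tv (v : pos) : LQ := << @ucm pos v >>.

Definition subst (s : pos -> LQ) (p : LQ) : LQ :=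
  mmap (fun r : rat => r%:MP)
       (fun mon : {cmonom pos} => \prod_(v <- finsupp mon) s v ^+ mon v) p.

Definition nonzero_pos (v : pos) : bool := has (fun k => k != 0%N) v.

(* v is a position of a multi-matrix of multi-degree V carrying a Q[t] entry *)
Definition valid_pos (V v : pos) : bool :=
  [&& size v == size V, all2 leq v V & nonzero_pos v].

Definition in_deg (V : pos) (p : LQ) : Prop :=
  forall mon, mon \in msupp p -> forall v, v \in finsupp mon -> valid_pos V v.

(* Effect of the face d_{i,j} (direction i, 0-based) on positions, in multi-degree V:
   for j < V_i slices j and j+1 are merged into j; for j = V_i slice V_i is
   merged into slice 0. *)
Definition face_pos (V : pos) (i j : nat) (v : pos) : pos :=
  let a := nth 0%N v i in
  let Vi := nth 0%N V i in
  set_nth 0%N v i (if (j < Vi)%N then (if (a <= j)%N then a else a.-1)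
                   else (if a == Vi then 0%N else a)).

(* d_{i,j}: entries landing at the same position are multiplied; entries landing
   at position 0 act on Q through t |-> 0. *)
Definition face (V : pos) (i j : nat) (p : LQ) : LQ :=
  subst (fun v => let w := face_pos V i j v in
                  if nonzero_pos w then tv w else 0) p.

Definition d_dir (V : pos) (i : nat) (p : LQ) : LQ :=
  if (0 < nth 0%N V i)%N then
    \sum_(j < (nth 0%N V i).+1) (-1) ^+ j * face V i j p
  else 0.

Definition tot_sign (V : pos) (i : nat) : LQ := (-1) ^+ (sumn (take i V)).

Definition lower (V : pos) (i : nat) : pos := set_nth 0%N V i (nth 0%N V i).-1.

(* An element x of Tot is given as a finite list of (V, x_V) pairs (summed);
   component of d x in multi-degree U. *)
Definition bdry (s : seq (pos * LQ)) (U : pos) : LQ :=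
  \sum_(x <- s) \sum_(i < size x.1 | (0 < nth 0%N x.1 i)%N && (lower x.1 i == U))
     tot_sign x.1 i * d_dir x.1 i x.2.

Definition homologous (W : pos) (c c' : LQ) : Prop :=
  exists s : seq (pos * LQ),
    (forall x, x \in s -> [/\ size x.1 = size W, sumn x.1 = (sumn W).+1
                            & in_deg x.1 x.2]) /\
    (forall U : pos, bdry s U = if U == W then c - c' else 0).

Definition tensor_ext (m k : nat) (b : pos) (y : {poly rat}) (c : LQ) : LQ :=
  subst (fun a => tv (a ++ nseq k 0%N)) c *
  \sum_(i < size y) (y`_i)%:MP * tv (nseq m 0%N ++ b) ^+ i.

(* The map c |-> c_(-,0) (x) y_(0,b) is Q-linear and, in each of the first m
   directions, commutes with every face d_(i,j): faces only move the first m
   coordinates of a position, and the position (0_m, b) of the entry y has all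
   of them zero, so it is fixed.  In each of the n - m new directions the
   multi-degree is 1, where d_i vanishes.  Hence the map carries the component
   of the total differential in multi-degree U to the one in multi-degree
   (U, 1_(n-m)), and the image of a boundary witness for c - c' is one for the
   images of c and c'. *)

From HB Require Import structures.
From mathcomp Require Import all_boot all_order all_algebra.
From mathcomp Require Import finmap.
From mathcomp.multinomials Require Import monalg.
Set Implicit Arguments. Unset Strict Implicit. Unset Printing Implicit Defensive.
Import GRing.Theory.
Local Open Scope ring_scope.

Definition mon_eval (s : pos -> LQ) (mon : {cmonom pos}) : LQ :=
  \prod_(v <- finsupp mon) s v ^+ mon v.

Lemma substE s p :
  subst s p = \sum_(mon <- msupp p) (p@_mon)%:MP * mon_eval s mon.
Proof. by []. Qed.

Lemma mon_evalEw s (d : {fset pos}) (mon : {cmonom pos}) :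
  (finsupp mon `<=` d)%fset -> mon_eval s mon = \prod_(v <- d) s v ^+ mon v.
Proof.
move=> le; rewrite /mon_eval (big_fset_incl _ le) // => v _.
by rewrite -cmE_eq0 => /eqP ->; rewrite expr0.
Qed.

Lemma mon_eval_is_multiplicative s : mmorphism (mon_eval s).
Proof.
split=> [a b|]; last by rewrite /mon_eval mdom1 big_seq_fset0.
rewrite (mon_evalEw s (fsubsetUl (finsupp a) (finsupp b))).
rewrite (mon_evalEw s (fsubsetUr (finsupp a) (finsupp b))) -big_split /=.
by rewrite /mon_eval mdomD; apply: eq_bigr => v _; rewrite cmM exprD.
Qed.

HB.instance Definition _ s :=
  isMultiplicative.Build _ _ (mon_eval s) (mon_eval_is_multiplicative s).

HB.instance Definition _ s :=
  GRing.RMorphism.copy (subst s) (mmap (@malgC _ rat) (mon_eval s)).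

Lemma substC s (a : rat) : subst s a%:MP = a%:MP.
Proof. exact: (mmapC (f := @malgC _ rat) (h := mon_eval s)). Qed.

Lemma subst_tv s v : subst s (tv v) = s v.
Proof.
rewrite [LHS](mmapU (f := @malgC _ rat) (h := mon_eval s)) /mon_eval.
by rewrite mdomU big_seq_fset1 cmUU expr1 mul_malgC scale1r.
Qed.

Lemma subst_comp s s' p :
  subst s (subst s' p) = subst (fun v => subst s (s' v)) p.
Proof.
rewrite [subst s' p]substE rmorph_sum; apply: eq_bigr => mon _.
rewrite rmorphM rmorph_prod; congr (_ * _); first exact: substC.
by apply: eq_bigr => v _; rewrite rmorphXn.
Qed.

Definition vars_in (P : pos -> Prop) (p : LQ) : Prop :=
  forall mon, mon \in msupp p -> forall v, v \in finsupp mon -> P v.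

Section VarsIn.
Variable P : pos -> Prop.

Lemma vars_in_sub (Q : pos -> Prop) p :
  (forall v, P v -> Q v) -> vars_in P p -> vars_in Q p.
Proof. by move=> PQ Pp mon /Pp Pmon v /Pmon /PQ. Qed.

Lemma vars_in0 : vars_in P 0.
Proof. by move=> mon; rewrite msupp0 in_fset0. Qed.

Lemma vars_inD p q : vars_in P p -> vars_in P q -> vars_in P (p + q).
Proof.
move=> Pp Pq mon /(fsubsetP (msuppD_le p q)); rewrite in_fsetU.
by case/orP => [/Pp|/Pq].
Qed.

Lemma vars_inM p q : vars_in P p -> vars_in P q -> vars_in P (p * q).
Proof.
move=> Pp Pq mon /msuppM_le [m1 [m2 [m1p m2q ->]]] v.
by rewrite mdomD in_fsetU => /orP [/(Pp _ m1p)|/(Pq _ m2q)].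
Qed.

Lemma vars_inC a : vars_in P a%:MP.
Proof.
move=> mon /(fsubsetP (msuppC_le a)); rewrite in_fset1 => /eqP -> v.
by rewrite mdom1 in_fset0.
Qed.

Lemma vars_inX p e : vars_in P p -> vars_in P (p ^+ e).
Proof.
move=> Pp; elim: e => [|e IHe]; last by rewrite exprS; apply: vars_inM.
by rewrite expr0 -mpolyC1E; apply: vars_inC.
Qed.

Lemma vars_in_sum (I : Type) (r : seq I) (Q : pred I) (F : I -> LQ) :
  (forall i, Q i -> vars_in P (F i)) -> vars_in P (\sum_(i <- r | Q i) F i).
Proof. exact: (big_ind _ vars_in0 vars_inD). Qed.

Lemma vars_in_prod (I : Type) (r : seq I) (Q : pred I) (F : I -> LQ) :
  (forall i, Q i -> vars_in P (F i)) -> vars_in P (\prod_(i <- r | Q i) F i).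
Proof.
by apply: (big_ind _ _ vars_inM); rewrite -mpolyC1E; apply: vars_inC.
Qed.

Lemma vars_in_tv v : P v -> vars_in P (tv v).
Proof.
move=> Pv mon; rewrite msuppU1 in_fset1 => /eqP -> u.
by rewrite mdomU in_fset1 => /eqP ->.
Qed.

Lemma vars_in_subst s p :
  vars_in (fun v => vars_in P (s v)) p -> vars_in P (subst s p).
Proof.
move=> Pp; rewrite substE big_seq; apply: vars_in_sum => mon mon_p.
apply: vars_inM; first exact: vars_inC.
rewrite /mon_eval big_seq; apply: vars_in_prod => v /(Pp _ mon_p).
exact: vars_inX.
Qed.

End VarsIn.

Lemma eq_in_subst s s' p :
  vars_in (fun v => s v = s' v) p -> subst s p = subst s' p.
Proof.
move=> ss'; rewrite [LHS]substE [RHS]substE.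
apply: eq_big_seq => mon mon_p.
suff -> : mon_eval s mon = mon_eval s' mon by [].
by apply: eq_big_seq => v /(ss' _ mon_p) ->.
Qed.

Lemma eq_cat_take (T : eqType) (s1 s2 s : seq T) :
  (s1 ++ s2 == s) = (s1 == take (size s1) s) && (s == take (size s1) s ++ s2).
Proof.
apply/eqP/andP => [<- | [/eqP s1E /eqP ->]]; last by rewrite -s1E.
by rewrite take_size_cat.
Qed.

Section Positions.
Local Open Scope nat_scope.
Implicit Types (V v : pos).

Lemma set_nth_cat v s i a : i < size v ->
  set_nth 0 (v ++ s) i a = set_nth 0 v i a ++ s.
Proof. by elim: v i => [|x v IHv] [|i] //= ?; rewrite IHv. Qed.

Lemma all2_cat (r : rel nat) (s1 s2 t1 t2 : seq nat) : size s1 = size t1 ->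
  all2 r (s1 ++ s2) (t1 ++ t2) = all2 r s1 t1 && all2 r s2 t2.
Proof. by elim: s1 t1 => [|x s1 IHs] [|z t1] //= [/IHs ->]; rewrite andbA. Qed.

Lemma all2_leq_nth v V i : all2 leq v V -> nth 0 v i <= nth 0 V i.
Proof.
elim: v V i => [|x v IHv] [|z V] [|i] //= /andP [? ?] //; exact: IHv.
Qed.

Lemma nonzero_posE v : nonzero_pos v = (v != nseq (size v) 0).
Proof.
rewrite /nonzero_pos (@eq_has _ _ (predC (pred1 0))) // has_predC.
by congr (~~ _); apply/all_pred1P/eqP.
Qed.

Lemma nonzero_pos_cat v s :
  nonzero_pos (v ++ s) = nonzero_pos v || nonzero_pos s.
Proof. exact: has_cat. Qed.

Lemma nonzero_pos_nseq0 k : nonzero_pos (nseq k 0) = false.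
Proof. by rewrite /nonzero_pos has_nseq andbF. Qed.

Lemma valid_pos_catl V v V' v' : valid_pos V v ->
  size v' = size V' -> all2 leq v' V' -> valid_pos (V ++ V') (v ++ v').
Proof.
case/and3P => /eqP vV le_vV nz_v v'V' le_v'V'; apply/and3P; split.
- by rewrite !size_cat vV v'V'.
- by rewrite all2_cat ?le_vV.
- by rewrite nonzero_pos_cat nz_v.
Qed.

Lemma valid_pos_catr V v V' v' : size v = size V -> all2 leq v V ->
  valid_pos V' v' -> valid_pos (V ++ V') (v ++ v').
Proof.
move=> vV le_vV /and3P [/eqP v'V' le_v'V' nz_v']; apply/and3P; split.
- by rewrite !size_cat vV v'V'.
- by rewrite all2_cat ?le_vV.
- by rewrite nonzero_pos_cat nz_v' orbT.
Qed.

Lemma valid_pos_nseq1 v : all (fun e => e <= 1) v -> v != nseq (size v) 0 ->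
  valid_pos (nseq (size v) 1) v.
Proof.
move=> le1_v nz_v; apply/and3P; split; rewrite ?size_nseq ?nonzero_posE //.
by elim: v le1_v {nz_v} => //= e v IHv /andP [-> /IHv].
Qed.

Lemma face_pos_cat V V' v v' i j : size v = size V -> i < size V ->
  face_pos (V ++ V') i j (v ++ v') = face_pos V i j v ++ v'.
Proof.
move=> vV iV; rewrite /face_pos !nth_cat iV vV iV set_nth_cat //.
by rewrite vV.
Qed.

Lemma face_pos_id V v i j : i < size v -> nth 0 v i = 0 -> face_pos V i j v = v.
Proof.
move=> iv vi0; rewrite /face_pos vi0.
set a := (if _ then _ else _); have -> : a = 0 by rewrite /a; do !case: ifP.
apply: (@eq_from_nth _ 0) => [|l _].
  by rewrite size_set_nth; apply/maxn_idPr.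
by rewrite nth_set_nth /=; case: eqP => // ->.
Qed.

Lemma face_pos01 V v i : nth 0 V i = 1 -> nth 0 v i <= 1 ->
  face_pos V i 0 v = face_pos V i 1 v.
Proof. by rewrite /face_pos => ->; case: (nth 0 v i) => [|[]]. Qed.

Lemma lower_cat V V' i : i < size V -> lower (V ++ V') i = lower V i ++ V'.
Proof. by move=> iV; rewrite /lower nth_cat iV set_nth_cat. Qed.

Lemma size_lower V i : i < size V -> size (lower V i) = size V.
Proof. by move=> iV; rewrite /lower size_set_nth; apply/maxn_idPr. Qed.

End Positions.

(* Both faces d_(i,0) and d_(i,1) merge slices 0 and 1. *)
Lemma d_dir_len1_eq0 V i p : nth 0%N V i = 1%N -> in_deg V p -> d_dir V i p = 0.
Proof.
move=> Vi1 p_deg; rewrite /d_dir Vi1 /= big_ord_recl big_ord1 expr0 mul1r.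
suff -> : face V i 0 p = face V i 1 p by rewrite expr1 mulN1r subrr.
apply: eq_in_subst; apply: vars_in_sub p_deg => v /and3P [_ le_vV _].
by rewrite /= face_pos01 // -Vi1 all2_leq_nth.
Qed.

Definition poly_tv (v : pos) (y : {poly rat}) : LQ :=
  \sum_(i < size y) (y`_i)%:MP * tv v ^+ i.

Lemma subst_poly_tv s v y : s v = tv v -> subst s (poly_tv v y) = poly_tv v y.
Proof.
move=> sv; rewrite rmorph_sum; apply: eq_bigr => i _.
(* Unrestricted rewriting would try to unify [tv v] with a constant, which
   does not terminate in practice. *)
by rewrite rmorphM rmorphXn /= [X in _ * X ^+ _]subst_tv sv [X in X * _]substC.
Qed.

Lemma vars_in_poly_tv (P : pos -> Prop) v y : P v -> vars_in P (poly_tv v y).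
Proof.
move=> Pv; apply: vars_in_sum => i _.
by apply: vars_inM; [apply: vars_inC | apply: vars_inX; apply: vars_in_tv].
Qed.

Definition pad_var (k : nat) (v : pos) : LQ := tv (v ++ nseq k 0%N).

Lemma tensor_extE m k b y c :
  tensor_ext m k b y c = subst (pad_var k) c * poly_tv (nseq m 0%N ++ b) y.
Proof. by []. Qed.

Definition bdry_at (V : pos) (p : LQ) (U : pos) : LQ :=
  \sum_(i < size V | (0 < nth 0 V i)%N && (lower V i == U))
     tot_sign V i * d_dir V i p.

Lemma bdryE s U : bdry s U = \sum_(x <- s) bdry_at x.1 x.2 U.
Proof. by []. Qed.

Section TensorExt.
Variables (m k : nat) (b : pos) (y : {poly rat}).
Hypothesis b_valid : valid_pos (nseq k 1%N) b.
Local Notation T := (tensor_ext m k b y).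
Local Notation ypos := (nseq m 0%N ++ b).

Lemma tensor_ext_is_zmod_morphism : zmod_morphism T.
Proof. by move=> p q; rewrite !tensor_extE rmorphB mulrBl. Qed.

HB.instance Definition _ :=
  GRing.isZmodMorphism.Build LQ LQ T tensor_ext_is_zmod_morphism.

Lemma tensor_ext_sign e p : T ((-1) ^+ e * p) = (-1) ^+ e * T p.
Proof. by rewrite !tensor_extE rmorphM rmorph_sign mulrA. Qed.

Section Degree.
Variable V : pos.
Hypothesis V_size : size V = m.

Lemma in_deg_tensor_ext p : in_deg V p -> in_deg (V ++ nseq k 1%N) (T p).
Proof.
move=> p_deg; apply: vars_inM.
  apply: vars_in_subst; apply: vars_in_sub p_deg => v v_valid.
  apply: vars_in_tv; apply: valid_pos_catl => //; first by rewrite !size_nseq.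
  by elim: k.
apply: vars_in_poly_tv; apply: valid_pos_catr => //; first by rewrite size_nseq.
by rewrite -V_size; elim: V.
Qed.

Lemma nonzero_ypos : nonzero_pos ypos.
Proof.
by case/and3P: b_valid => _ _ nz_b; rewrite nonzero_pos_cat nz_b orbT.
Qed.

Lemma face_tensor_ext i j p : (i < m)%N -> in_deg V p ->
  face (V ++ nseq k 1%N) i j (T p) = T (face V i j p).
Proof.
move=> i_lt p_deg.
rewrite [T p]tensor_extE [T (face V i j p)]tensor_extE [LHS]rmorphM /=.
rewrite [X in _ * X = _]subst_poly_tv; last first.
  rewrite face_pos_id ?nonzero_ypos //.
    by rewrite size_cat size_nseq ltn_addr.
  by rewrite nth_cat size_nseq i_lt nth_nseq i_lt.
rewrite [X in X * _ = _]subst_comp [X in _ = X * _]subst_comp.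
apply: (congr1 (fun q => q * _)); apply: eq_in_subst.
apply: vars_in_sub p_deg => v /and3P [/eqP v_size _ _] /=.
rewrite [LHS]subst_tv face_pos_cat ?v_size ?V_size //.
move: (face_pos V i j v) => w.
rewrite nonzero_pos_cat nonzero_pos_nseq0 orbF.
by case: (nonzero_pos w); rewrite ?subst_tv ?rmorph0.
Qed.

Lemma d_dir_tensor_ext i p : (i < m)%N -> in_deg V p ->
  d_dir (V ++ nseq k 1%N) i (T p) = T (d_dir V i p).
Proof.
move=> i_lt p_deg; rewrite /d_dir nth_cat V_size i_lt.
case: (0 < nth 0 V i)%N; last by rewrite raddf0.
rewrite raddf_sum /=; apply: eq_bigr => j _.
by rewrite tensor_ext_sign face_tensor_ext.
Qed.

Lemma d_dir_tensor_ext_eq0 i p : (m <= i < m + k)%N -> in_deg V p ->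
  d_dir (V ++ nseq k 1%N) i (T p) = 0.
Proof.
case/andP => le_mi lt_ik p_deg.
apply: d_dir_len1_eq0; last exact: in_deg_tensor_ext.
by rewrite nth_cat V_size ltnNge le_mi /= nth_nseq ltn_subLR // lt_ik.
Qed.

Lemma bdry_at_tensor_ext p U : in_deg V p ->
  bdry_at (V ++ nseq k 1%N) (T p) U =
  if U == take m U ++ nseq k 1%N then T (bdry_at V p (take m U)) else 0.
Proof.
move=> p_deg; rewrite /bdry_at size_cat size_nseq V_size big_split_ord /=.
rewrite [X in _ + X]big1 ?addr0 => [|i _]; last first.
  by rewrite d_dir_tensor_ext_eq0 ?mulr0 // leq_addr ltn_add2l ltn_ord.
have lt_iV (i : 'I_m) : (i < size V)%N by rewrite V_size.
have lowerE (i : 'I_m) : (lower (V ++ nseq k 1%N) i == U) =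
    (lower V i == take m U) && (U == take m U ++ nseq k 1%N).
  by rewrite lower_cat // eq_cat_take size_lower // V_size.
have [U_split | U_nsplit] := boolP (U == take m U ++ nseq k 1%N); last first.
  by rewrite big_pred0 // => i; rewrite lowerE (negbTE U_nsplit) !andbF.
rewrite raddf_sum /=; apply: eq_big => i.
  by rewrite nth_cat lt_iV lowerE U_split andbT.
move=> _; rewrite /tot_sign (takel_cat _ (ltnW (lt_iV i))).
by rewrite tensor_ext_sign (d_dir_tensor_ext (ltn_ord i) p_deg).
Qed.

End Degree.

Lemma bdry_map_tensor_ext s U :
  (forall x, x \in s -> size x.1 = m /\ in_deg x.1 x.2) ->
  bdry [seq (x.1 ++ nseq k 1%N, T x.2) | x <- s] U =
  if U == take m U ++ nseq k 1%N then T (bdry s (take m U)) else 0.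
Proof.
move=> s_deg; rewrite !bdryE big_map.
have [U_split | U_nsplit] := boolP (U == take m U ++ nseq k 1%N).
  rewrite raddf_sum /=; apply: eq_big_seq => x /s_deg [x_size x_deg].
  by rewrite bdry_at_tensor_ext // U_split.
rewrite big1_seq // => x /andP [_ /s_deg [x_size x_deg]].
by rewrite bdry_at_tensor_ext // (negbTE U_nsplit).
Qed.

End TensorExt.

Theorem lemma4p8 (m n : nat) (b : seq nat) (y : {poly rat}) (W : seq nat)
    (c c' : LQ) :
  (1 <= m)%N -> (m < n)%N ->
  size b = (n - m)%N -> all (fun e => e <= 1)%N b -> b != nseq (n - m) 0%N ->
  size W = m -> in_deg W c -> in_deg W c' ->
  homologous W c c' ->
  homologous (W ++ nseq (n - m) 1%N)
    (tensor_ext m (n - m) b y c) (tensor_ext m (n - m) b y c').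
Proof.
move=> _ _ b_size b_le1 b_nz W_size _ _ [s [s_deg s_bdry]].
set k := (n - m)%N in b_size b_nz *.
have b_valid : valid_pos (nseq k 1%N) b.
  by rewrite -b_size valid_pos_nseq1 ?b_size.
have s_deg' x : x \in s -> size x.1 = m /\ in_deg x.1 x.2.
  by case/s_deg => x_size _ x_deg; rewrite x_size W_size.
exists [seq (x.1 ++ nseq k 1%N, tensor_ext m k b y x.2) | x <- s]; split.
  move=> _ /mapP [x x_s ->] /=; have [x_size x_sum x_deg] := s_deg x x_s.
  split; first by rewrite !size_cat x_size.
    by rewrite !sumn_cat x_sum sumn_nseq mul1n.
  by apply: in_deg_tensor_ext; rewrite ?x_size.
move=> U; rewrite bdry_map_tensor_ext // s_bdry.
have [-> | U_ne] := eqVneq U (W ++ nseq k 1%N).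
  by rewrite take_size_cat // !eqxx raddfB.
have [U_split | //] := eqVneq U (take m U ++ nseq k 1%N).
case: eqP => [UW | _]; last exact: raddf0.
by case/eqP: U_ne; rewrite U_split UW.
Qed.
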